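(* Let $H\ge2$ be an integer and consider an $H$-round online first-price auction in which $v_t=1$ for all $t\in\{1,\dots,H\}$ and \[ m_t=\begin{cases}0,& t<\tau,\\ \delta,&\tau\le t\le H,\end{cases} \] where $\tau$ is drawn uniformly at random from $\{1,2,\dots,H\}$ and $\delta=\frac1H$. Then every non-anticipatory (admissible) policy has expected dynamic regret at least $\frac12-\frac1{2H}$, i.e. \[ \mathbb{E}\left[\sum_{t=1}^H\max\{v_t-m_t,0\}-\sum_{t=1}^H r(b_t;v_t,m_t)\right]\ge\frac12-\frac1{2H}, \] the expectation being over $\tau$ and the policy's randomness.
   Context: In an $H$-round online first-price auction, at each round $t$ the learner observes its value $v_t\in[0,1]$, submits a bid $b_t\in[0,1]$, then observes $m_t\in[0,1]$, the highest bid of the other bidders, and receives reward $r(b_t;v_t,m_t)$ with $r(b;v,m)\coloneqq(v-b)\mathbbm{1}(b\ge m)$. A non-anticipatory (admissible) policy chooses $b_t=\pi_t((v_s,m_s)_{s=1}^{t-1},v_t,U)$ for measurable functions $\pi_t$ and an internal random variable $U$ independent of $\tau$. *)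

From HB Require Import structures.
From mathcomp Require Import all_boot all_order all_algebra.
From mathcomp Require Import all_classical all_reals all_analysis.
Set Implicit Arguments. Unset Strict Implicit. Unset Printing Implicit Defensive.
Import Order.TTheory GRing.Theory Num.Theory.
Local Open Scope ring_scope.

Definition reward (R : realType) (b v m : R) : R :=
  (v - b) * (if m <= b then 1 else 0).

Definition mt (R : realType) (H tau t : nat) : R :=
  if (t < tau)%N then 0 else (H%:R)^-1.

Definition vt (R : realType) (t : nat) : R := 1.

Definition history (R : realType) (H tau t : nat) : seq (R * R) :=
  [seq (vt R s, mt R H tau s) | s <- iota 1 t.-1].

(* A policy: pi t h v u = bid at round t given history h, current value v,
   and the policy's internal random variable u. *)
Definition bid (R : realType) (U : Type)
  (pi : nat -> seq (R * R) -> R -> U -> R) (H tau t : nat) (u : U) : R :=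
  pi t (history R H tau t) (vt R t) u.

Definition regret (R : realType) (U : Type)
  (pi : nat -> seq (R * R) -> R -> U -> R) (H tau : nat) (u : U) : R :=
  \sum_(1 <= t < H.+1)
     (Num.max (vt R t - mt R H tau t) 0
      - reward (bid pi H tau t u) (vt R t) (mt R H tau t)).

From HB Require Import structures.
From mathcomp Require Import all_boot all_order all_algebra.
From mathcomp Require Import all_classical all_reals all_analysis.
From mathcomp Require Import measurable_realfun.
From mathcomp Require Import zify ring lra.
Set Implicit Arguments. Unset Strict Implicit. Unset Printing Implicit Defensive.
Import Order.TTheory GRing.Theory Num.Theory.
Local Open Scope ring_scope.

(* Until the jump at [tau] the learner sees the same history as when there is
   no jump at all, so its bid [c_t] at a round [t <= tau] does not depend on
   [tau].  The regret at jump time [tau] is therefore at least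
   [c_1 + ... + c_(tau-1)] (paid in vain while [m_t = 0]) plus the regret of
   bidding [c_tau] against [m = 1/H].  Summed over [tau], round [t] thus
   contributes [(H - t) c_t] plus the regret of [c_t] against [1/H], which is
   at least [(H - t)/H]: a bid below [1/H] forfeits [1 - 1/H], a bid above it
   overpays [(H - t)/H] in total.  Summing over [t] gives [(H - 1)/2] for every
   value of the internal randomness. *)

Section RoundRegret.
Variable R : realType.

Definition round_regret (m b : R) : R := Num.max (1 - m) 0 - reward b 1 m.

Lemma round_regret0 (b : R) : 0 <= b -> round_regret 0 b = b.
Proof.
move=> b_ge0; rewrite /round_regret /reward b_ge0 subr0 mulr1.
by rewrite (max_idPl ler01) opprB addrC subrK.
Qed.

Lemma round_regret_ge0 (m b : R) : 0 <= m <= 1 -> 0 <= round_regret m b.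
Proof.
move=> /andP[m_ge0 m_le1]; rewrite /round_regret /reward.
rewrite (_ : Num.max (1 - m) 0 = 1 - m); last by apply/max_idPl; lra.
by case: ifP => m_le_b; lra.
Qed.

Lemma round_regret_tradeoff (x k b : R) :
  0 < x -> 0 <= k -> k * x <= 1 - x -> 0 <= b ->
  k * x <= round_regret x b + k * b.
Proof.
move=> x_gt0 k_ge0 kx_le b_ge0; rewrite /round_regret /reward.
rewrite (_ : Num.max (1 - x) 0 = 1 - x); last by apply/max_idPl; nra.
case: ifP => [x_le_b|_]; last by have := mulr_ge0 k_ge0 b_ge0; lra.
by have := ler_wpM2l k_ge0 x_le_b; lra.
Qed.

End RoundRegret.

Lemma double_sum_gaps (n : nat) :
  (\sum_(1 <= t < n.+1) (n - t)).*2 = (n * n.-1)%N.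
Proof.
elim: n => [|n IHn]; first by rewrite big_geq.
rewrite big_nat_recl //; under eq_bigr do rewrite subSS.
by rewrite doubleD IHn; case: n {IHn} => [|n] /=; lia.
Qed.

Lemma sum_gaps_ratio (R : realFieldType) (n : nat) : (0 < n)%N ->
  \sum_(1 <= t < n.+1) (n - t)%:R / n%:R = (n%:R - 1) / 2 :> R.
Proof.
move=> n_gt0; have n_neq0 : n%:R != 0 :> R by rewrite pnatr_eq0 -lt0n.
rewrite -mulr_suml -natr_sum.
have /(congr1 (GRing.natmul (1 : R))) := double_sum_gaps n.
rewrite -muln2 !natrM -subn1 natrB // => sum2.
apply: (@mulIf _ 2); first by rewrite pnatr_eq0.
by rewrite mulrAC sum2; field.
Qed.

Lemma history_before_jump (R : realType) (H tau tau' t : nat) :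
  (t <= tau)%N -> (t <= tau')%N -> history R H tau t = history R H tau' t.
Proof.
move=> t_le_tau t_le_tau'; apply/eq_in_map => s.
rewrite mem_iota => /andP[s_ge1 s_lt]; have s_lt_t : (s < t)%N by lia.
by rewrite /mt (leq_trans s_lt_t t_le_tau) (leq_trans s_lt_t t_le_tau').
Qed.

Section JumpInstance.
Variables (R : realType) (U : Type) (pi : nat -> seq (R * R) -> R -> U -> R).
Hypothesis pi_bid : forall t h v u, 0 <= pi t h v u <= 1.
Variables (H : nat) (u : U).
Hypothesis H_gt0 : (0 < H)%N.

(* [tau = H + 1] encodes the scenario without any jump. *)
Definition nojump_bid (t : nat) : R := pi t (history R H H.+1 t) 1 u.

Lemma bid_before_jump (tau t : nat) : (t <= tau)%N -> (t <= H)%N ->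
  bid pi H tau t u = nojump_bid t.
Proof.
move=> t_le_tau t_le_H.
by rewrite /bid /nojump_bid (@history_before_jump _ H tau H.+1) // leqW.
Qed.

Lemma nojump_bid_ge0 (t : nat) : 0 <= nojump_bid t.
Proof. by case/andP: (pi_bid t (history R H H.+1 t) 1 u). Qed.

Let inv_H_bounds : 0 <= (H%:R : R)^-1 <= 1.
Proof. by rewrite invr_ge0 ler0n /= invf_le1 ?ler1n // ltr0n. Qed.

Definition regret_minorant (tau t : nat) : R :=
  if (t < tau)%N then nojump_bid t
  else if t == tau then round_regret (H%:R^-1) (nojump_bid t) else 0.

Lemma regretE (tau : nat) : regret pi H tau u =
  \sum_(1 <= t < H.+1) round_regret (mt R H tau t) (bid pi H tau t u).
Proof. by []. Qed.

Lemma regret_ge0 (tau : nat) : 0 <= regret pi H tau u.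
Proof.
rewrite regretE; apply: sumr_ge0 => t _; rewrite /mt; case: ifP => _.
  by rewrite round_regret0 //; case/andP: (pi_bid t (history R H tau t) 1 u).
exact: round_regret_ge0.
Qed.

Lemma regret_ge_minorant (tau : nat) :
  \sum_(1 <= t < H.+1) regret_minorant tau t <= regret pi H tau u.
Proof.
rewrite regretE; apply: ler_sum_nat => t /andP[_ t_le_H].
rewrite /regret_minorant /mt; case: ltnP => [t_lt_tau|tau_le_t].
  by rewrite round_regret0 bid_before_jump ?nojump_bid_ge0 //; lia.
case: eqVneq => [t_eq_tau|_]; last exact: round_regret_ge0.
by rewrite bid_before_jump // t_eq_tau.
Qed.

Lemma sum_regret_minorant_over_jumps (t : nat) : (1 <= t <= H)%N ->
  \sum_(1 <= tau < H.+1) regret_minorant tau t =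
  round_regret (H%:R^-1) (nojump_bid t) + (H - t)%:R * nojump_bid t.
Proof.
move=> /andP[t_ge1 t_le_H]; rewrite (@big_cat_nat _ _ _ t) //=; last by lia.
rewrite big1_seq ?add0r => [|tau /andP[_]]; last first.
  rewrite mem_index_iota /regret_minorant => /andP[_ tau_lt_t].
  by rewrite ltnNge (ltnW tau_lt_t) (gtn_eqF tau_lt_t).
rewrite big_ltn; last by lia.
rewrite /regret_minorant ltnn eqxx; congr (_ + _).
rewrite (eq_big_nat _ _ (F2 := fun=> nojump_bid t)) => [|tau /andP[-> _]] //.
by rewrite sumr_const_nat mulr_natl subSS.
Qed.

Lemma round_contribution_ge (t : nat) : (1 <= t <= H)%N ->
  (H - t)%:R / H%:R <= \sum_(1 <= tau < H.+1) regret_minorant tau t.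
Proof.
move=> /andP[t_ge1 t_le_H]; rewrite sum_regret_minorant_over_jumps ?t_ge1 //.
apply: round_regret_tradeoff; rewrite ?invr_gt0 ?ltr0n ?ler0n ?nojump_bid_ge0 //.
have gap_le : (H - t)%:R <= H%:R - 1 :> R.
  by rewrite natrB // -(ler_nat R) in t_ge1 *; lra.
apply: le_trans (ler_wpM2r _ gap_le) _; first by rewrite invr_ge0 ler0n.
by rewrite mulrBl mulfV ?mul1r // pnatr_eq0 -lt0n.
Qed.

Lemma sum_regret_over_jumps_ge :
  (H%:R - 1) / 2 <= \sum_(1 <= tau < H.+1) regret pi H tau u.
Proof.
rewrite -sum_gaps_ratio //.
apply: le_trans (ler_sum_nat (fun tau _ => regret_ge_minorant tau)).
rewrite exchange_big /=; apply: ler_sum_nat => t t_in.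
by apply: round_contribution_ge; rewrite -ltnS.
Qed.

End JumpInstance.

Lemma measurable_regret (R : realType) (d : measure_display) (U : measurableType d)
  (pi : nat -> seq (R * R) -> R -> U -> R)
  (pi_meas : forall t h v, measurable_fun setT (pi t h v)) (H tau : nat) :
  measurable_fun setT (regret pi H tau).
Proof.
apply: measurable_sum => t; apply: measurable_funB => //.
apply: measurable_funM; first by apply: measurable_funB => //; exact: pi_meas.
by apply: measurable_fun_ifT => //; apply: measurable_fun_ler => //; exact: pi_meas.
Qed.

Local Open Scope ereal_scope.

Lemma probability_integral_ge_cst (R : realType) (d : measure_display)
  (T : measurableType d) (P : probability T R) (f : T -> \bar R) (c : R) :
  (0 <= c)%R -> measurable_fun setT f -> (forall x, c%:E <= f x) ->
  c%:E <= \int[P]_x f x.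
Proof.
move=> c_ge0 f_meas f_ge_c.
rewrite -[c%:E]mule1 -(probability_setT P) -integral_cst //.
exact: ge0_le_integral.
Qed.

Theorem lemma2 (R : realType) (H : nat) (hH : (2 <= H)%N)
  (d : measure_display) (U : measurableType d) (P : probability U R)
  (pi : nat -> seq (R * R) -> R -> U -> R)
  (pi_bid : forall t h v u, (0 <= pi t h v u <= 1)%R)
  (pi_meas : forall t h v, measurable_fun setT (pi t h v)) :
  ((1 / 2 - 1 / (2 * H%:R))%R)%:E <=
    ((H%:R)^-1)%:E *
      \sum_(1 <= tau < H.+1) \int[P]_u (regret pi H tau u)%:E.
Proof.
have H_gt0 : (0 < H)%N by lia.
have H_neq0 : (H%:R : R) != 0%R by rewrite pnatr_eq0 -lt0n.
have regret_meas tau : measurable_fun setT (fun u => (regret pi H tau u)%:E).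
  exact/measurable_EFinP/measurable_regret.
rewrite -ge0_integral_sum // => [|tau u _]; last by rewrite lee_fin regret_ge0.
have -> : ((1 / 2 - 1 / (2 * H%:R))%R)%:E =
    ((H%:R)^-1)%:E * (((H%:R - 1) / 2)%R : R)%:E.
  by rewrite -EFinM; congr EFin; field.
apply: lee_wpmul2l; first by rewrite lee_fin invr_ge0 ler0n.
apply: probability_integral_ge_cst => [||u].
- by rewrite divr_ge0 // subr_ge0 ler1n; lia.
- exact: emeasurable_sum.
- by rewrite sumEFin lee_fin; exact: sum_regret_over_jumps_ge.
Qed.
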